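(* Let $k$ be a fixed complex number. For every integer $n>0$, $$(\Lambda_{\Omega}\ast\beta_k)(n)=\Omega(n)\beta_k(n)-\beta_k(n).$$
   Context: $\Omega(n)=\sum_{p^\alpha\parallel n}\alpha$ is the number of prime factors of $n$ counted with multiplicity. $\Lambda_\Omega(n)=1$ if $n=p^k$ for some prime $p$ and integer $k\geq1$, and $\Lambda_\Omega(n)=0$ otherwise. $\beta_k(n)=\sum_{p\mid n}p^k$ is the sum of the $k$-th powers of the distinct prime factors of $n$. $\ast$ is Dirichlet convolution $(F\ast G)(n)=\sum_{d\mid n}F(d)G(n/d)$. *)

From HB Require Import structures.
From mathcomp Require Import all_boot all_order all_algebra.
From mathcomp Require Import all_classical all_reals all_analysis.
From mathcomp Require Import complex.
Set Implicit Arguments. Unset Strict Implicit. Unset Printing Implicit Defensive.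
Import Order.TTheory GRing.Theory Num.Theory.
Local Open Scope ring_scope.
Local Open Scope complex_scope.

(* Complex power x^k := exp(k * ln x) for a positive real base x, written out:
   exp((a + i b) ln x) = e^(a ln x) (cos(b ln x) + i sin(b ln x)). *)
Definition cpow (R : realType) (x : R) (k : R[i]) : R[i] :=
  let: a +i* b := k in
  (expR (a * ln x) * cos (b * ln x)) +i* (expR (a * ln x) * sin (b * ln x)).

Definition Omega_mult (n : nat) : nat := (\sum_(p <- primes n) logn p n)%N.

Definition LambdaOmega (R : realType) (n : nat) : R[i] :=
  if [exists p : 'I_n.+1, exists j : 'I_n.+1,
        [&& prime p, (0 < j)%N & n == (p ^ j)%N]] then 1 else 0.

Definition beta_pow (R : realType) (k : R[i]) (n : nat) : R[i] :=
  \sum_(p <- primes n) cpow (p%:R : R) k.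

Definition dconv (R : realType) (F G : nat -> R[i]) (n : nat) : R[i] :=
  \sum_(d <- divisors n) F d * G (n %/ d)%N.

From HB Require Import structures.
From mathcomp Require Import all_boot all_order all_algebra.
From mathcomp Require Import all_classical all_reals all_analysis.
From mathcomp Require Import complex.
Set Implicit Arguments.
Unset Strict Implicit.
Unset Printing Implicit Defensive.
Import Order.TTheory GRing.Theory Num.Theory.
Local Open Scope ring_scope.

(* Only the divisors [d = p ^ j] with [p | n] and [1 <= j <= logn p n]
   contribute to the convolution, and for such [d] the quotient [n / p ^ j]
   still has the prime divisor [p] unless [j = logn p n].  Hence the [p]-block
   of the convolution is [logn p n * beta_k(n) - p ^ k], and summing over the
   primes [p | n] yields [Omega(n) beta_k(n) - beta_k(n)]. *)

Definition prime_power (d : nat) : bool :=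
  [exists p : 'I_d.+1, exists j : 'I_d.+1,
     [&& prime p, (0 < j)%N & d == (p ^ j)%N]].

Lemma LambdaOmegaE (R : realType) (d : nat) :
  @LambdaOmega R d = (prime_power d)%:R.
Proof. by rewrite /LambdaOmega -/(prime_power d); case: (prime_power d). Qed.

Lemma prime_powerP (d : nat) :
  reflect (exists p j, [/\ prime p, (0 < j)%N & d = (p ^ j)%N]) (prime_power d).
Proof.
apply: (iffP idP).
  by case/existsP=> p /existsP[j /and3P[pp j0 /eqP->]]; exists p, j.
case=> p [j [pp j0 ->]]; apply/existsP.
have lt_p : (p < (p ^ j).+1)%N.
  by rewrite ltnS -{1}(expn1 p) (leq_pexp2l (prime_gt0 pp) j0).
have lt_j : (j < (p ^ j).+1)%N by rewrite ltnW // ltnS ltn_expl ?prime_gt1.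
by exists (Ordinal lt_p); apply/existsP; exists (Ordinal lt_j); rewrite /= pp j0 eqxx.
Qed.

Lemma pfactor_inj (p q j l : nat) : prime p -> prime q -> (0 < j)%N -> (0 < l)%N ->
  (p ^ j)%N = (q ^ l)%N -> p = q /\ j = l.
Proof.
move=> pp qq j0 l0 E.
have epq : p = q.
  by rewrite -(pdiv_pfactor j.-1 pp) -(pdiv_pfactor l.-1 qq) !prednK // E.
by split=> //; rewrite -(pfactorK j pp) E epq pfactorK.
Qed.

Lemma prime_power_divisors (n : nat) : (0 < n)%N ->
  perm_eq [seq d <- divisors n | prime_power d]
          [seq (p ^ j)%N | p <- primes n, j <- iota 1 (logn p n)].
Proof.
move=> n0; apply: uniq_perm; first by rewrite filter_uniq ?divisors_uniq.
  apply: allpairs_uniq_dep => [||[p j] [q l]]; first exact: primes_uniq.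
    by move=> p _; apply: iota_uniq.
  case/allpairsPdep=> p' [j' [pn ji [-> ->]]] /allpairsPdep[q' [l' [qn li [-> ->]]]] E.
  move: pn qn ji li; rewrite !mem_primes !mem_iota => /andP[pp _] /andP[qq _].
  by case/andP=> j0 _ /andP[l0 _]; case: (pfactor_inj pp qq j0 l0 E) => -> ->.
move=> d; rewrite mem_filter -dvdn_divisors //; apply/andP/allpairsPdep.
  case=> /prime_powerP[p [j [pp j0 ->]]] dn; exists p, j; split=> //.
    by rewrite mem_primes pp n0 (dvdn_trans (dvdn_exp j0 (dvdnn p)) dn).
  by rewrite mem_iota j0 add1n ltnS -pfactor_dvdn.
case=> p [j []]; rewrite mem_primes mem_iota add1n ltnS => /andP[pp _].
case/andP=> j0 jl ->; split; last by rewrite pfactor_dvdn.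
by apply/prime_powerP; exists p, j.
Qed.

Lemma dconv_LambdaOmega (R : realType) (F : nat -> R[i]) (n : nat) : (0 < n)%N ->
  dconv (@LambdaOmega R) F n =
  \sum_(p <- primes n) \sum_(j <- iota 1 (logn p n)) F (n %/ p ^ j)%N.
Proof.
move=> n0; transitivity (\sum_(d <- divisors n | prime_power d) F (n %/ d)%N).
  rewrite big_mkcond; apply: eq_bigr => d _.
  by rewrite LambdaOmegaE; case: (prime_power d); rewrite ?mul1r ?mul0r.
by rewrite -big_filter (perm_big _ (prime_power_divisors n0)) big_allpairs_dep.
Qed.

Section BetaPow.
Variables (R : realType) (k : R[i]).

Lemma beta_pow_mul_pfactor (p m e : nat) :
  prime p -> (0 < m)%N -> ~~ (p %| m)%N -> (0 < e)%N ->
  beta_pow k (m * p ^ e)%N = cpow (p%:R : R) k + beta_pow k m.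
Proof.
move=> pp m0 npm e0; rewrite /beta_pow (perm_big (p :: primes m)) ?big_cons //.
apply: uniq_perm; first exact: primes_uniq.
  by rewrite cons_uniq primes_uniq mem_primes (negbTE npm) !andbF.
move=> q; rewrite primesM ?expn_gt0 ?(prime_gt0 pp) // primesX // (primes_prime pp).
by rewrite !inE orbC.
Qed.

Lemma sum_beta_pow_divn_pfactor (p n : nat) : (0 < n)%N -> p \in primes n ->
  \sum_(j <- iota 1 (logn p n)) beta_pow k (n %/ p ^ j)%N =
  (logn p n)%:R * beta_pow k n - cpow (p%:R : R) k.
Proof.
move=> n0; rewrite mem_primes => /and3P[pp _ pn].
have [m cpm nE] := pfactor_coprime pp n0.
have m0 : (0 < m)%N by move: n0; rewrite nE muln_gt0 => /andP[].
have npm : ~~ (p %| m)%N by rewrite -prime_coprime.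
have a0 : (0 < logn p n)%N by rewrite logn_gt0 mem_primes pp n0 pn.
set a := logn p n in a0 nE *.
have divn_pfactor j : (j <= a)%N -> (n %/ p ^ j = m * p ^ (a - j))%N.
  by move=> ja; rewrite nE -{1}(subnK ja) expnD mulnA mulnK ?expn_gt0 ?prime_gt0.
have betam : beta_pow k m = beta_pow k n - cpow (p%:R : R) k.
  by rewrite nE beta_pow_mul_pfactor // addrC addKr.
have beta_lt j : (j < a)%N -> beta_pow k (n %/ p ^ j)%N = beta_pow k n.
  move=> ja; rewrite divn_pfactor ?(ltnW ja) // beta_pow_mul_pfactor ?subn_gt0 //.
  by rewrite betam addrC subrK.
have [a' aE] : exists a', a = a'.+1 by exists a.-1; rewrite prednK.
rewrite aE -[iota _ _]/(index_iota 1 a'.+2) big_nat_recr //= -aE.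
rewrite divn_pfactor // subnn muln1 betam.
rewrite (eq_big_nat _ _ (F2 := fun=> beta_pow k n)) => [|j /andP[_ /beta_lt]//].
by rewrite sumr_const_nat aE subn1 mulr_natl mulrSr addrA.
Qed.

End BetaPow.

Theorem theorem3p1 (R : realType) (k : R[i]) (n : nat) (hn : (0 < n)%N) :
  dconv (@LambdaOmega R) (beta_pow k) n = (Omega_mult n)%:R * beta_pow k n - beta_pow k n.
Proof.
rewrite dconv_LambdaOmega //.
rewrite (eq_big_seq (fun p => (logn p n)%:R * beta_pow k n - cpow (p%:R : R) k)).
  by rewrite sumrB -mulr_suml -natr_sum.
by move=> p; apply: sum_beta_pow_divn_pfactor.
Qed.
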